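(* Let $f(z):=\sum_{j=0}^\infty p_j\frac{z^j}{j!}$ with complex $p_j$ satisfying $|p_j|\le(j+2)^{-2}$ for all $j\ge0$, let $n\in\mathbb{N}$ and $N=2n+1$. For each $n\ge1$ there exist pairwise distinct complex numbers $\lambda_1,\dots,\lambda_N$ with $|\lambda_k|=1$ such that for every $r\in(0,1)$, \[\left|\sum_{k=1}^N\lambda_ke^{\lambda_kz}-f(z)\right|\le\frac{|z|^n}{n!}\frac{15}{1-r^{n+1}}\left(n+\frac{2}{1-r}\right)\left(1+\frac{|z|e^{|z|/r}}{rn+r}\right)\qquad\text{for all }z\in\mathbb{C}.\] *)

From Stdlib Require Import Reals Arith Factorial.
From Coquelicot Require Import Coquelicot.

Definition Cexp (z : C) : C :=
  (exp (Re z) * cos (Im z), exp (Re z) * sin (Im z))%R.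

(* f(z) = sum_{j>=0} p_j z^j / j!, computed componentwise
   (the series converges absolutely when p is bounded). *)
Definition fser (p : nat -> C) (z : C) : C :=
  (Series (fun j => Re (p j * Cpow z j / INR (fact j))%C),
   Series (fun j => Im (p j * Cpow z j / INR (fact j))%C)).

(* Let a_k solve Newton's recursion (k + 1) a_(k+1) + sum_(m <= k) p_m a_(k-m) = 0,
   a_0 = 1, i.e. a_k are the coefficients of exp (- sum_m p_m x^(m+1) / (m+1)).
   Comparing this recursion with the weights 1/(m+2)^2 gives
   sum_(1 <= j <= n) |a_j| <= 11/16 < 1.  Hence the self-inversive polynomial
   P(x) = sum_(j <= n) (a_j x^j + conj(a_j) x^(N-j)) has N distinct roots mu_k on
   the unit circle: e^(-iNt/2) P(e^(it)) is real, and at t = 2 pi k / N its two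
   j = 0 terms add up to 2 (-1)^k, which dominates all the others.  Since
   P(0) = 1, this forces P = prod_k (1 - x / mu_k), and Newton's identities show
   that lambda_k = 1/mu_k has power sums sum_k lambda_k^(m+1) = p_m for m < n.
   Therefore the first n Taylor coefficients of sum_k lambda_k e^(lambda_k z) and
   of f agree, and the difference is bounded by tails of the exponential series. *)

From Stdlib Require Import Reals Arith Factorial Lra Lia.
From Coquelicot Require Import Coquelicot.
Open Scope R_scope.

Fixpoint newton_table (p : nat -> C) (k : nat) : nat -> C :=
  match k with
  | O => fun _ => 1%C
  | S k' => fun i =>
      if Nat.eqb i (S k')
      then (- sum_n (fun m => p m * newton_table p k' (k' - m)) k' / INR (S k'))%C
      else newton_table p k' i
  end.

Definition newton_coef (p : nat -> C) (k : nat) : C := newton_table p k k.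

Lemma newton_coef_0 p : newton_coef p 0 = 1%C.
Proof. reflexivity. Qed.

Lemma newton_table_stable p k i : (i <= k)%nat -> newton_table p k i = newton_coef p i.
Proof.
  induction k as [|k IH]; intros Hi.
  - now replace i with O by lia.
  - destruct (Nat.eq_dec i (S k)) as [->|Hne]; [reflexivity|].
    simpl; rewrite (proj2 (Nat.eqb_neq _ _) Hne). apply IH; lia.
Qed.

Lemma newton_coef_rec p k :
  (INR (S k) * newton_coef p (S k) + sum_n (fun m => p m * newton_coef p (k - m)) k = 0)%C.
Proof.
  unfold newton_coef at 1; cbn [newton_table]; rewrite Nat.eqb_refl.
  rewrite (sum_n_ext_loc _ (fun m => p m * newton_coef p (k - m))%C)
    by (intros m _; rewrite newton_table_stable by lia; reflexivity).
  assert (INR (S k) <> 0) by (apply not_0_INR; lia).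
  field. intros E; apply H; now injection E.
Qed.

(* Telescoping: 1/(m+2)^2 <= 2/(2m+3) - 2/(2m+5). *)
Lemma sum_inv_sq_le K : sum_n (fun m => / (INR m + 2) ^ 2) K <= 2 / 3 - 2 / (2 * INR K + 5).
Proof.
  induction K as [|K IH].
  - rewrite sum_O; simpl; lra.
  - rewrite sum_Sn, S_INR; change plus with Rplus.
    pose proof (pos_INR K) as HK; set (x := INR K) in *.
    assert (/ (x + 1 + 2) ^ 2 <= 2 / (2 * x + 5) - 2 / (2 * (x + 1) + 5)).
    { apply Rminus_le_0.
      replace (2 / (2 * x + 5) - 2 / (2 * (x + 1) + 5) - / (x + 1 + 2) ^ 2)
        with (/ ((2 * x + 5) * (2 * x + 7) * (x + 3) ^ 2)) by (field; lra).
      left; apply Rinv_0_lt_compat; repeat apply Rmult_lt_0_compat; try apply pow_lt; lra. }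
    lra.
Qed.

Section ConvolutionBound.
Variable alpha : nat -> R.
Hypothesis alpha_ge0 : forall j, 0 <= alpha j.
Hypothesis alpha_0 : alpha O = 1.
Hypothesis alpha_S : forall k,
  INR (S k) * alpha (S k) <= sum_n (fun m => alpha (k - m)%nat / (INR m + 2) ^ 2) k.

Let T := sum_n alpha.
Let W := sum_n (fun j => INR j * alpha j).

Lemma partial_sum_mono i j : (i <= j)%nat -> T i <= T j.
Proof.
  induction 1; [lra|]. unfold T; rewrite sum_Sn; change plus with Rplus.
  pose proof (alpha_ge0 (S m)); fold T; lra.
Qed.

Lemma weighted_sum_le K :
  W (S K) <= sum_n (fun m => T (K - m)%nat / (INR m + 2) ^ 2) K.
Proof.
  induction K as [|K IH].
  - pose proof (alpha_S 0). unfold W, T. rewrite sum_Sn, !sum_O in *.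
    change plus with Rplus. simpl in *. lra.
  - unfold W; rewrite sum_Sn; fold W; change plus with Rplus.
    pose proof (alpha_S (S K)) as HS.
    rewrite sum_Sn in HS |- *; change plus with Rplus in HS |- *.
    rewrite Nat.sub_diag in HS |- *.
    replace (T O) with (alpha O) by (unfold T; now rewrite sum_O).
    rewrite (sum_n_ext_loc (fun m => T (S K - m)%nat / (INR m + 2) ^ 2)
      (fun m => plus (T (K - m)%nat / (INR m + 2) ^ 2) (alpha (S K - m)%nat / (INR m + 2) ^ 2))).
    + rewrite sum_n_plus; change plus with Rplus. lra.
    + intros m Hm. replace (S K - m)%nat with (S (K - m)) by lia.
      unfold T; rewrite sum_Sn. apply Rdiv_plus_distr.
Qed.

Lemma weighted_sum_ge K : 2 * T K - 2 - alpha 1 <= W K.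
Proof.
  induction K as [|K IH].
  - unfold W, T; rewrite !sum_O, alpha_0. pose proof (alpha_ge0 1). simpl; lra.
  - unfold W, T in *; rewrite !sum_Sn; change plus with Rplus.
    destruct K as [|K].
    + rewrite !sum_O, alpha_0; simpl; lra.
    + pose proof (alpha_ge0 (S (S K))).
      assert (2 <= INR (S (S K))) by (rewrite !S_INR; pose proof (pos_INR K); lra).
      nra.
Qed.

Lemma alpha_1_le : alpha 1 <= / 4.
Proof. pose proof (alpha_S 0) as H. rewrite sum_O in H. simpl in H. rewrite alpha_0 in H. lra. Qed.

Lemma weighted_partial_sum_le K :
  sum_n (fun m => T (K - m)%nat / (INR m + 2) ^ 2) K <= 2 / 3 * T (S K).
Proof.
  assert (T_ge1 : 1 <= T (S K))
    by (replace 1 with (T O) by (unfold T; now rewrite sum_O); apply partial_sum_mono; lia).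
  apply Rle_trans with (sum_n (fun m => / (INR m + 2) ^ 2 * T (S K)) K).
  - apply sum_n_m_le; intros m. rewrite Rmult_comm.
    apply Rmult_le_compat_r; [left; apply Rinv_0_lt_compat, pow_lt; pose proof (pos_INR m); lra|].
    apply partial_sum_mono; lia.
  - apply Rle_trans with (sum_n (fun m => / (INR m + 2) ^ 2) K * T (S K)).
    + right; apply (sum_n_mult_r (T (S K))).
    + pose proof (sum_inv_sq_le K).
      assert (0 < 2 / (2 * INR K + 5)) by (pose proof (pos_INR K); apply Rdiv_lt_0_compat; lra).
      nra.
Qed.

(* [W (S K)] is squeezed between [2 T (S K) - 2 - alpha 1] and [2/3 T (S K)]. *)
Lemma partial_sum_le K : T K <= 27 / 16.
Proof.
  destruct K as [|K]; [unfold T; rewrite sum_O, alpha_0; lra|].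
  pose proof (weighted_sum_le K). pose proof (weighted_sum_ge (S K)).
  pose proof (weighted_partial_sum_le K). pose proof alpha_1_le. lra.
Qed.

Lemma convolution_tail_le K : sum_n_m alpha 1 K <= 11 / 16.
Proof.
  pose proof (partial_sum_le K) as H. unfold T, sum_n in H.
  rewrite sum_Sn_m, alpha_0 in H by lia. change plus with Rplus in H. lra.
Qed.
End ConvolutionBound.

Lemma newton_coef_tail_le p : (forall j, Cmod (p j) <= / (INR j + 2) ^ 2) ->
  forall K, sum_n_m (fun j => Cmod (newton_coef p j)) 1 K <= 11 / 16.
Proof.
  intros hp. apply convolution_tail_le;
    [intros; apply Cmod_ge_0 | rewrite newton_coef_0; apply Cmod_1 |].
  intros k. set (s := sum_n (fun m => p m * newton_coef p (k - m))%C k).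
  assert (E : (INR (S k) * newton_coef p (S k))%C = (- s)%C).
  { rewrite <- (Cplus_0_l (- s)), <- (newton_coef_rec p k). fold s. ring. }
  rewrite <- (Rabs_pos_eq (INR (S k))) by apply pos_INR.
  rewrite <- Cmod_R, <- Cmod_mult, E, Cmod_opp.
  eapply Rle_trans; [apply (norm_sum_n_m (fun m => p m * newton_coef p (k - m))%C) |].
  apply sum_n_m_le; intros m. change norm with Cmod. rewrite Cmod_mult, Rmult_comm.
  apply Rmult_le_compat_l; [apply Cmod_ge_0 | apply hp].
Qed.

Definition cis (t : R) : C := (cos t, sin t).

Lemma cis_pow t j : (cis t ^ j)%C = cis (INR j * t).
Proof.
  induction j as [|j IH].
  - unfold cis; simpl; rewrite Rmult_0_l, cos_0, sin_0; reflexivity.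
  - rewrite Cpow_S, IH, S_INR. unfold cis, Cmult; simpl.
    replace ((INR j + 1) * t) with (t + INR j * t) by ring.
    rewrite cos_plus, sin_plus. apply injective_projections; simpl; ring.
Qed.

Lemma Cmod_cis t : Cmod (cis t) = 1.
Proof.
  assert (H : cos t ^ 2 + sin t ^ 2 = 1) by (rewrite <- (sin2_cos2 t); unfold Rsqr; ring).
  unfold Cmod, cis; cbn [fst snd]. rewrite H; apply sqrt_1.
Qed.

Lemma cos_INR_PI k : cos (INR k * PI) = (-1) ^ k.
Proof.
  induction k as [|k IH].
  - simpl; rewrite Rmult_0_l; apply cos_0.
  - rewrite S_INR, Rmult_plus_distr_r, Rmult_1_l, neg_cos, IH. simpl; ring.
Qed.

Lemma neg1_pow_mul_self k : (-1) ^ k * (-1) ^ k = 1.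
Proof. rewrite <- pow_add. replace (k + k)%nat with (2 * k)%nat by lia. apply pow_1_even. Qed.

Lemma cis_inj s t : 0 <= s -> s < t -> t < s + 2 * PI -> cis s <> cis t.
Proof.
  intros Hs Hst Ht E. injection E as Ec Es.
  assert (Hsin : sin (t - s) = 0) by (rewrite sin_minus, Ec, Es; ring).
  assert (Hcos : cos (t - s) = 1).
  { rewrite cos_minus, <- Ec, <- Es. pose proof (sin2_cos2 s) as H; unfold Rsqr in H. lra. }
  destruct (sin_eq_0_0 _ Hsin) as [k Hk]. pose proof PI_RGT_0.
  assert (Hk0 : (0 < k)%Z) by (apply lt_IZR, (Rmult_lt_reg_r PI); lra).
  assert (Hk2 : (k < 2)%Z) by (apply lt_IZR, (Rmult_lt_reg_r PI); lra).
  replace k with 1%Z in Hk by lia. rewrite Hk, Rmult_1_l, cos_PI in Hcos. lra.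
Qed.

Lemma self_inv_term_cis (a : C) (N j : nat) (t : R) : (j <= N)%nat ->
  (a * cis t ^ j + Cconj a * cis t ^ (N - j))%C =
  (2 * cis (INR N / 2 * t) * Re (a * cis ((INR j - INR N / 2) * t)))%C.
Proof.
  intros Hj. rewrite !cis_pow, minus_INR by exact Hj.
  set (u := INR N / 2 * t); set (v := (INR j - INR N / 2) * t).
  replace (INR j * t) with (u + v) by (unfold u, v; field).
  replace ((INR N - INR j) * t) with (u - v) by (unfold u, v; field).
  unfold cis. rewrite cos_plus, sin_plus, cos_minus, sin_minus.
  destruct a as [x y]. unfold Cplus, Cmult, Cconj, Re; simpl.
  apply injective_projections; simpl; ring.
Qed.

Lemma RtoC_sum_n (f : nat -> R) n : RtoC (sum_n f n) = sum_n (fun j => RtoC (f j)) n.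
Proof.
  induction n as [|n IH]; [now rewrite !sum_O|].
  rewrite !sum_Sn, <- IH. apply RtoC_plus.
Qed.

Section SelfInversiveRoots.
Variables (n : nat) (a : nat -> C).
Hypothesis a_0 : a O = 1%C.
Hypothesis a_tail_lt1 : sum_n_m (fun j => Cmod (a j)) 1 n < 1.
Let N := (2 * n + 1)%nat.

Definition self_inv_trig (t : R) : R :=
  sum_n (fun j => Re (a j * cis ((INR j - INR N / 2) * t))) n.

Lemma continuity_self_inv_trig : continuity self_inv_trig.
Proof.
  apply derivable_continuous; intros t; apply ex_derive_Reals_0.
  unfold self_inv_trig.
  apply (@ex_derive_sum_n R_AbsRing R_NormedModule
           (fun j t => Re (a j * cis ((INR j - INR N / 2) * t)))).
  intros j _. unfold cis, Cmult, Re; cbn [fst snd]. auto_derive; auto.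
Qed.

Lemma self_inv_eval_cis t :
  sum_n (fun j => a j * cis t ^ j + Cconj (a j) * cis t ^ (N - j))%C n =
  (2 * cis (INR N / 2 * t) * self_inv_trig t)%C.
Proof.
  rewrite (sum_n_ext_loc _ (fun j => mult (2 * cis (INR N / 2 * t))%C
                                      (RtoC (Re (a j * cis ((INR j - INR N / 2) * t)))))).
  - rewrite sum_n_mult_l, <- RtoC_sum_n. reflexivity.
  - intros j Hj. apply self_inv_term_cis. unfold N; lia.
Qed.

Definition grid (k : nat) : R := 2 * PI * INR k / INR N.

Lemma INR_N_pos : 0 < INR N.
Proof. apply lt_0_INR; unfold N; lia. Qed.

Lemma grid_le i j : (i <= j)%nat -> grid i <= grid j.
Proof.
  intros Hij. unfold grid, Rdiv. pose proof INR_N_pos. pose proof PI_RGT_0.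
  apply Rmult_le_compat_r; [left; apply Rinv_0_lt_compat; lra|].
  apply Rmult_le_compat_l; [lra | now apply le_INR].
Qed.

Lemma grid_lt k : grid k < grid (S k).
Proof.
  unfold grid, Rdiv. pose proof INR_N_pos. pose proof PI_RGT_0. rewrite S_INR.
  apply Rmult_lt_compat_r; [apply Rinv_0_lt_compat; lra | nra].
Qed.

Lemma self_inv_trig_grid_sign k : 0 < (-1) ^ k * self_inv_trig (grid k).
Proof.
  unfold self_inv_trig, sum_n. rewrite sum_Sn_m by lia. change plus with Rplus.
  assert (Hlead : Re (a 0 * cis ((INR 0 - INR N / 2) * grid k)) = (-1) ^ k).
  { rewrite a_0, Cmult_1_l, <- cos_INR_PI. unfold cis, Re; cbn [fst].
    rewrite <- cos_neg. f_equal. unfold grid. simpl INR. field. apply Rgt_not_eq, INR_N_pos. }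
  set (r := sum_n_m _ 1 n).
  assert (Hr : Rabs r < 1).
  { eapply Rle_lt_trans; [apply (@norm_sum_n_m R_AbsRing R_NormedModule)|].
    eapply Rle_lt_trans; [|apply a_tail_lt1].
    apply sum_n_m_le; intros j. eapply Rle_trans; [apply re_le_Cmod|].
    rewrite Cmod_mult, Cmod_cis, Rmult_1_r. apply Rle_refl. }
  assert (Habs : Rabs ((-1) ^ k * r) < 1) by (rewrite Rabs_mult, pow_1_abs, Rmult_1_l; exact Hr).
  apply Rabs_def2 in Habs. rewrite Hlead, Rmult_plus_distr_l, neg1_pow_mul_self. lra.
Qed.

Lemma self_inv_trig_grid_change k : self_inv_trig (grid k) * self_inv_trig (grid (S k)) <= 0.
Proof.
  pose proof (self_inv_trig_grid_sign k) as H1. pose proof (self_inv_trig_grid_sign (S k)) as H2.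
  simpl pow in H2. set (s := (-1) ^ k) in *.
  set (g1 := self_inv_trig (grid k)) in *; set (g2 := self_inv_trig (grid (S k))) in *.
  assert (Hsq : s * s = 1) by apply neg1_pow_mul_self.
  assert (E : (s * g1) * (-1 * s * g2) = - (g1 * g2)).
  { transitivity (- (s * s) * (g1 * g2)); [ring | rewrite Hsq; ring]. }
  assert (0 < (s * g1) * (-1 * s * g2)) by (apply Rmult_lt_0_compat; assumption).
  lra.
Qed.

Definition trig_root (k : nat) : R :=
  proj1_sig (IVT_cor self_inv_trig (grid k) (grid (S k)) continuity_self_inv_trig
               (Rlt_le _ _ (grid_lt k)) (self_inv_trig_grid_change k)).

Lemma trig_root_spec k :
  grid k < trig_root k < grid (S k) /\ self_inv_trig (trig_root k) = 0.
Proof.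
  unfold trig_root. destruct (IVT_cor _ _ _ _ _ _) as [x [[H1 H2] Hx]]; simpl.
  pose proof (self_inv_trig_grid_sign k). pose proof (self_inv_trig_grid_sign (S k)).
  repeat split; auto.
  - destruct H1 as [H1 | <-]; [exact H1 | rewrite Hx in *; lra].
  - destruct H2 as [H2 | ->]; [exact H2 | rewrite Hx in *; lra].
Qed.

Lemma self_inversive_unit_roots : exists mu : nat -> C,
  (forall k, (k < N)%nat -> Cmod (mu k) = 1 /\
     sum_n (fun j => a j * mu k ^ j + Cconj (a j) * mu k ^ (N - j))%C n = RtoC 0) /\
  (forall i j, (i < N)%nat -> (j < N)%nat -> mu i = mu j -> i = j).
Proof.
  exists (fun k => cis (trig_root k)). split.
  - intros k _. split; [apply Cmod_cis|].
    rewrite self_inv_eval_cis, (proj2 (trig_root_spec k)). apply Cmult_0_r.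
  - assert (Hlt : forall i j, (i < j < N)%nat -> cis (trig_root i) <> cis (trig_root j)).
    { intros i j Hij. destruct (trig_root_spec i) as [[Hi1 Hi2] _].
      destruct (trig_root_spec j) as [[Hj1 Hj2] _].
      pose proof (grid_le 0 i ltac:(lia)). pose proof (grid_le (S i) j ltac:(lia)).
      pose proof (grid_le (S j) N ltac:(lia)).
      assert (grid 0 = 0) by (unfold grid; simpl; lra).
      assert (grid N = 2 * PI) by (unfold grid; field; apply Rgt_not_eq, INR_N_pos).
      apply cis_inj; lra. }
    intros i j Hi Hj E. destruct (Nat.lt_total i j) as [H | [H | H]]; auto.
    + exfalso; apply (Hlt i j); auto.
    + exfalso; apply (Hlt j i); auto.
Qed.
End SelfInversiveRoots.

Module PowerSums.
From HB Require Import structures.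
From mathcomp Require Import all_boot all_algebra ring zify.
From mathcomp Require Import Rstruct.
Set Implicit Arguments. Unset Strict Implicit. Unset Printing Implicit Defensive.
Import GRing.Theory.
Local Open Scope ring_scope.

Section NewtonIdentities.
Variable A : comNzRingType.

Definition recip_prod (l : seq A) : {poly A} := \prod_(x <- l) (1 - x *: 'X).
Definition power_sum (l : seq A) (m : nat) : A := \sum_(x <- l) x ^+ m.

Lemma coef_recip_prod_cons x l i :
  (recip_prod (x :: l))`_i = (recip_prod l)`_i - x * ('X * recip_prod l)`_i.
Proof. by rewrite /recip_prod big_cons mulrBl mul1r coefB -scalerAl coefZ. Qed.

Lemma telescope_pow (x : A) (e : nat -> A) k :
  \sum_(m < k.+1) x ^+ m.+1 * (e (k - m).+1 - x * e (k - m)%N) = x * e k.+1 - x ^+ k.+2 * e 0.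
Proof.
pose d m := x ^+ m.+1 * e (k.+1 - m)%N.
have -> : \sum_(m < k.+1) x ^+ m.+1 * (e (k - m).+1 - x * e (k - m)%N)
          = - \sum_(0 <= m < k.+1) (d m.+1 - d m).
  rewrite -sumrN big_mkord; apply: eq_bigr => m _.
  rewrite /d subSS subSn; [rewrite [x ^+ m.+2]exprS; ring | by rewrite -ltnS].
by rewrite (telescope_sumr d) // /d subnn subn0 opprB expr1.
Qed.

Lemma newton_identity l k :
  \sum_(m < k.+1) power_sum l m.+1 * (recip_prod l)`_(k - m)%N
  + k.+1%:R * (recip_prod l)`_k.+1 = 0.
Proof.
elim: l k => [|x l IH] k.
  rewrite /recip_prod big_nil coef1 mulr0 addr0.
  by apply: big1 => m _; rewrite /power_sum big_nil mul0r.
set c := fun i => (recip_prod l)`_i; set c' := fun i => ('X * recip_prod l)`_i.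
have c'S i : c' i.+1 = c i by rewrite /c' coefXM.
have c'0 : c' 0 = 0 by rewrite /c' coefXM.
have shifted : \sum_(m < k.+1) power_sum l m.+1 * c' (k - m)%N + k.+1%:R * c k = c k.
  case: k => [|k]; first by rewrite big_ord1 c'0 mulr0 add0r mul1r.
  rewrite big_ord_recr /= subnn c'0 mulr0 addr0 mulrSr mulrDl mul1r addrA.
  rewrite -[RHS]add0r; congr (_ + _); rewrite -[RHS](IH k); congr (_ + _).
  by apply: eq_bigr => m _; rewrite subSn ?c'S // -ltnS.
have telescope : \sum_(m < k.+1) x ^+ m.+1 * (c (k - m)%N - x * c' (k - m)%N) = x * c k.
  under eq_bigr => m _ do rewrite -c'S.
  by rewrite telescope_pow c'0 mulr0 subr0 c'S.
rewrite /power_sum.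
under eq_bigr => m _ do rewrite big_cons coef_recip_prod_cons mulrDl.
rewrite big_split /= telescope coef_recip_prod_cons -/c -/c'.
have -> : \sum_(m < k.+1) power_sum l m.+1 * (c (k - m)%N - x * c' (k - m)%N)
          = \sum_(m < k.+1) power_sum l m.+1 * c (k - m)%N
            - x * \sum_(m < k.+1) power_sum l m.+1 * c' (k - m)%N.
  by rewrite mulr_sumr -sumrB; apply: eq_bigr => m _; ring.
have eA : \sum_(m < k.+1) power_sum l m.+1 * c (k - m)%N = - (k.+1%:R * c k.+1).
  by apply/eqP; rewrite -addr_eq0 (IH k).
have eB : \sum_(m < k.+1) power_sum l m.+1 * c' (k - m)%N = c k - k.+1%:R * c k.
  by rewrite -{1}shifted addrK.
rewrite eA eB coefXM /= -/(c k) -/(c k.+1); ring.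
Qed.

Lemma newton_recursion_unique (c s t : nat -> A) n :
  c 0 = 1 ->
  (forall k, (k < n)%N -> \sum_(m < k.+1) s m * c (k - m)%N + k.+1%:R * c k.+1 = 0) ->
  (forall k, (k < n)%N -> \sum_(m < k.+1) t m * c (k - m)%N + k.+1%:R * c k.+1 = 0) ->
  forall m, (m < n)%N -> s m = t m.
Proof.
move=> c0 hs ht; elim/ltn_ind => m IH ltmn.
have sum_eq : \sum_(i < m) s i * c (m - i)%N = \sum_(i < m) t i * c (m - i)%N.
  by apply: eq_bigr => i _; rewrite IH // (ltn_trans _ ltmn).
have := hs m ltmn; have := ht m ltmn.
rewrite !big_ord_recr /= sum_eq subnn c0 !mulr1 => eqt eqs.
apply/(addIr (m.+1%:R * c m.+1))/(addrI (\sum_(i < m) t i * c (m - i)%N)).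
by rewrite !addrA eqs eqt.
Qed.

End NewtonIdentities.

Section ReciprocalRoots.
Variable F : fieldType.

Lemma recip_prod_coef0 (l : seq F) : (recip_prod l)`_0 = 1.
Proof.
rewrite -horner_coef0 /recip_prod horner_prod; apply: big1 => x _.
by rewrite hornerD hornerN hornerZ hornerX hornerC mulr0 subr0.
Qed.

Lemma recip_prod_map_inv (rs : seq F) : all (fun x => x != 0) rs ->
  recip_prod [seq x^-1 | x <- rs] = (\prod_(x <- rs) - x^-1) *: \prod_(x <- rs) ('X - x%:P).
Proof.
elim: rs => [|x rs IH] /=; first by rewrite /recip_prod !big_nil scale1r.
case/andP=> x0 rs0; rewrite /recip_prod !big_cons -/(recip_prod _) IH //.
have factor : 1 - x^-1 *: 'X = - x^-1 *: ('X - x%:P).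
  by rewrite scaleNr scalerBr opprB scale_polyC mulVf // addrC.
by rewrite factor -scalerAr -scalerAl scalerA mulrC.
Qed.

Lemma poly_eq_recip_prod (P : {poly F}) (rs : seq F) :
  P`_0 = 1 -> (size P <= (size rs).+1)%N -> uniq rs -> all (root P) rs ->
  P = recip_prod [seq x^-1 | x <- rs].
Proof.
move=> P0 sizeP urs rootsP.
have rs_neq0 : all (fun x => x != 0) rs.
  apply/allP => x xrs; apply: contraTneq (allP rootsP x xrs) => ->.
  by rewrite /root horner_coef0 P0 oner_eq0.
have [q defP] := uniq_roots_prod_XsubC rootsP (etrans (uniq_rootsE rs) urs).
set Q := \prod_(z <- rs) ('X - z%:P) in defP.
have Q_neq0 : Q != 0 by rewrite -size_poly_eq0 size_prod_XsubC.
have q_neq0 : q != 0.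
  by apply: contra_eq_neq P0 => q0; rewrite defP q0 mul0r coef0 eq_sym oner_neq0.
have /size1_polyC defq : (size q <= 1)%N.
  move: sizeP; rewrite defP size_mul // size_prod_XsubC addnS /=.
  by rewrite -add1n leq_add2r.
have recip0 := recip_prod_coef0 [seq x^-1 | x <- rs].
rewrite recip_prod_map_inv // coefZ in recip0.
rewrite recip_prod_map_inv // defP defq mul_polyC; congr (_ *: _).
have Q0_neq0 : Q`_0 != 0 by apply: contra_eq_neq recip0 => ->; rewrite mulr0 eq_sym oner_neq0.
by apply: (mulIf Q0_neq0); rewrite recip0 -coefCM -defq -defP.
Qed.

Lemma recip_root_power_sums (P : {poly F}) (rs : seq F) (p : nat -> F) n :
  P`_0 = 1 -> (size P <= (size rs).+1)%N -> uniq rs -> all (root P) rs ->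
  (forall k, (k < n)%N -> \sum_(m < k.+1) p m * P`_(k - m)%N + k.+1%:R * P`_k.+1 = 0) ->
  forall m, (m < n)%N -> \sum_(x <- rs) x ^- m.+1 = p m.
Proof.
move=> P0 sizeP urs rootsP rec m ltmn.
have defP := poly_eq_recip_prod P0 sizeP urs rootsP.
have -> : \sum_(x <- rs) x ^- m.+1 = power_sum [seq x^-1 | x <- rs] m.+1.
  by rewrite /power_sum big_map; apply: eq_bigr => x _; rewrite exprVn.
apply: (@newton_recursion_unique _ (fun i => P`_i) (fun m => power_sum _ m.+1) p n) => // k _.
by rewrite defP newton_identity.
Qed.

End ReciprocalRoots.

Definition CC : Type := C.
HB.instance Definition _ := Choice.copy CC (R * R)%type.
HB.instance Definition _ := GRing.isZmodule.Build CC
  (fun x y z => Cplus_assoc x y z) Cplus_comm Cplus_0_l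
  (fun x => etrans (Cplus_comm _ x) (Cplus_opp_r x)).
HB.instance Definition _ := GRing.Zmodule_isComNzRing.Build CC
  (fun x y z => Cmult_assoc x y z) Cmult_comm Cmult_1_l
  (fun x y z => Cmult_plus_distr_r x y z) (introN eqP C1_nz).
Lemma CC_mulVf (x : CC) : x != 0 -> (Cmult (Cinv x) x : CC) = 1.
Proof. by move=> /eqP x0; exact: (Cinv_l x x0). Qed.
Lemma CC_inv0 : (Cinv (0 : CC) : CC) = 0.
Proof. by apply: injective_projections; rewrite /= /Rdiv ?Ropp_0 Rmult_0_l. Qed.
HB.instance Definition _ := GRing.ComNzRing_isField.Build CC CC_mulVf CC_inv0.

Lemma sum_nE (f : nat -> C) k : sum_n f k = \sum_(i < k.+1) (f i : CC).
Proof.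
elim: k => [|k IH]; first by rewrite sum_O big_ord1.
by rewrite sum_Sn big_ord_recr IH.
Qed.

Lemma CpowE (x : C) m : Cpow x m = (x : CC) ^+ m.
Proof. by elim: m => [|m IH] //=; rewrite exprS IH. Qed.

Lemma INRE k : RtoC (INR k) = k%:R :> CC.
Proof. by elim: k => [|k IH] //; rewrite S_INR RtoC_plus IH mulrSr. Qed.

Definition self_inv_poly n (a : nat -> C) : {poly CC} :=
  \sum_(j < n.+1) ((a j : CC) *: 'X^j + (Cconj (a j) : CC) *: 'X^(2 * n + 1 - j)).

Lemma coef_self_inv_poly n a i : (i <= n)%N -> (self_inv_poly n a)`_i = a i.
Proof.
move=> le_in; rewrite coef_sum (bigD1 (Ordinal (le_in : (i < n.+1)%N))) //=.
rewrite coefD !coefZ !coefXn eqxx (_ : (i == 2 * n + 1 - i)%N = false); last by apply/eqP; lia.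
rewrite mulr1 mulr0 addr0 big1 ?addr0 // => j /eqP ne_ji.
rewrite coefD !coefZ !coefXn (_ : (i == j)%N = false); last first.
  by apply/eqP => eij; apply: ne_ji; apply: val_inj.
by rewrite (_ : (i == 2 * n + 1 - j)%N = false) ?mulr0 ?addr0 //; apply/eqP; have := ltn_ord j; lia.
Qed.

Lemma size_self_inv_poly n a : (size (self_inv_poly n a) <= (2 * n + 1).+1)%N.
Proof.
apply/leq_sizeP => i lt_i; rewrite coef_sum big1 // => j _.
rewrite coefD !coefZ !coefXn (_ : (i == j)%N = false); last by apply/eqP; have := ltn_ord j; lia.
by rewrite (_ : (i == 2 * n + 1 - j)%N = false) ?mulr0 ?addr0 //; apply/eqP; lia.
Qed.

Lemma horner_self_inv_poly n a (x : CC) : (self_inv_poly n a).[x] =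
  \sum_(j < n.+1) ((a j : CC) * x ^+ j + (Cconj (a j) : CC) * x ^+ (2 * n + 1 - j)).
Proof. by rewrite horner_sum; apply: eq_bigr => j _; rewrite hornerD !hornerZ !hornerXn. Qed.

Lemma self_inversive_power_sums n (p a mu : nat -> C) :
  a O = RtoC 1 ->
  (forall k, (k < n)%coq_nat ->
     Cplus (Cmult (INR (S k)) (a (S k))) (sum_n (fun m => Cmult (p m) (a (k - m)%coq_nat)) k)
     = RtoC 0) ->
  (forall k, (k < 2 * n + 1)%coq_nat ->
     sum_n (fun j => Cplus (Cmult (a j) (Cpow (mu k) j))
                           (Cmult (Cconj (a j)) (Cpow (mu k) (2 * n + 1 - j)))) n = RtoC 0) ->
  (forall i j, (i < 2 * n + 1)%coq_nat -> (j < 2 * n + 1)%coq_nat -> mu i = mu j -> i = j) ->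
  forall m, (m < n)%coq_nat -> sum_n (fun k => Cinv (Cpow (mu k) (S m))) (2 * n) = p m.
Proof.
move=> a0 rec roots inj m /ltP ltmn.
pose rs := [seq (mu k : CC) | k <- iota 0 (2 * n + 1)].
have -> : sum_n (fun k => Cinv (Cpow (mu k) (S m))) (2 * n) = \sum_(x <- rs) x ^- m.+1.
  rewrite /rs; have -> : iota 0 (2 * n + 1) = index_iota 0 (2 * n).+1.
    by rewrite /index_iota subn0 addn1.
  by rewrite sum_nE big_map big_mkord; apply: eq_bigr => k _; rewrite CpowE.
apply: (@recip_root_power_sums _ (self_inv_poly n a) rs p n) => //.
- by rewrite coef_self_inv_poly.
- by rewrite size_map size_iota size_self_inv_poly.
- rewrite map_inj_in_uniq ?iota_uniq // => i j; rewrite !mem_iota => /andP[_ lti] /andP[_ ltj].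
  by apply: inj; apply/ltP.
- apply/allP => x /mapP[k]; rewrite mem_iota => /andP[_ /ltP ltk] ->.
  rewrite /root horner_self_inv_poly; apply/eqP/(etrans _ (roots k ltk)).
  by rewrite sum_nE; apply: eq_bigr => j _; rewrite !CpowE.
- move=> k ltkn; apply: etrans (rec k (elimT ltP ltkn)).
  rewrite sum_nE INRE addrC coef_self_inv_poly //; congr (_ + _); apply: eq_bigr => i _.
  by rewrite coef_self_inv_poly //; lia.
Qed.

End PowerSums.

Definition exp_tail (x : R) (n : nat) : R :=
  x ^ n / INR (fact n) + x ^ S n / INR (fact (S n)) * exp x.

Lemma is_series_exp x : is_series (fun k => x ^ k / INR (fact k)) (exp x).
Proof.
  eapply is_series_ext; [|apply (is_exp_Reals x)].
  intros k. unfold scal; simpl; unfold mult; simpl. rewrite pow_n_pow. reflexivity.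
Qed.

Lemma fact_mul_le m k : (fact m * fact k <= fact (m + k))%nat.
Proof.
  induction k as [|k IH]; [rewrite Nat.add_0_r; simpl; lia|].
  rewrite Nat.add_succ_r; simpl fact.
  assert (fact m * fact k * S k <= fact (m + k) * S (m + k))%nat by (apply Nat.mul_le_mono; lia).
  nia.
Qed.

Lemma exp_series_tail_le x n : 0 <= x ->
  ex_series (fun k => x ^ (n + k) / INR (fact (n + k))) /\
  Series (fun k => x ^ (n + k) / INR (fact (n + k))) <= exp_tail x n.
Proof.
  intros Hx.
  assert (Hex : ex_series (fun k => x ^ (n + k) / INR (fact (n + k)))).
  { apply (ex_series_incr_n (fun k => x ^ k / INR (fact k)) n). eexists; apply is_series_exp. }
  split; [exact Hex|].
  rewrite Series_incr_1 by exact Hex. rewrite Nat.add_0_r.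
  apply Rplus_le_compat_l.
  rewrite <- (is_series_unique _ _ (is_series_exp x)), <- Series_scal_l.
  apply Series_le; [intros k; split|].
  - apply Rmult_le_pos; [apply pow_le; exact Hx | left; apply Rinv_0_lt_compat, INR_fact_lt_0].
  - replace (n + S k)%nat with (S n + k)%nat by lia. rewrite pow_add.
    pose proof (INR_fact_lt_0 (S n)). pose proof (INR_fact_lt_0 k).
    assert (Hf : INR (fact (S n)) * INR (fact k) <= INR (fact (S n + k)))
      by (rewrite <- mult_INR; apply le_INR, fact_mul_le).
    assert (0 <= x ^ S n * x ^ k) by (apply Rmult_le_pos; apply pow_le; exact Hx).
    replace (x ^ S n / INR (fact (S n)) * (x ^ k / INR (fact k)))
      with (x ^ S n * x ^ k / (INR (fact (S n)) * INR (fact k))) by (field; lra).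
    apply Rmult_le_compat_l; [assumption|]. apply Rinv_le_contravar; nra.
  - apply (ex_series_scal_l (V := R_NormedModule)). eexists; apply is_series_exp.
Qed.

Lemma Series_sub_sum_n_le (f : nat -> R) M x n : 0 <= x ->
  (forall j, Rabs (f j) <= M * (x ^ j / INR (fact j))) ->
  Rabs (Series f - sum_n f n) <= M * exp_tail x (S n).
Proof.
  intros Hx Hf.
  assert (Hex : forall g : nat -> R,
            (forall j, Rabs (g j) <= M * (x ^ j / INR (fact j))) -> ex_series g).
  { intros g Hg.
    apply (ex_series_le (V := R_CompleteNormedModule) g (fun j => M * (x ^ j / INR (fact j))) Hg).
    apply (ex_series_scal_l (V := R_NormedModule)). eexists; apply is_series_exp. }
  rewrite (Series_incr_n f (S n)), sum_n_Reals by (lia || now apply Hex). simpl pred.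
  replace (sum_f_R0 f n + Series (fun k => f (S n + k)%nat) - sum_f_R0 f n)
    with (Series (fun k => f (S n + k)%nat)) by ring.
  destruct (exp_series_tail_le x (S n) Hx) as [Htail_ex Htail].
  assert (Habs : ex_series (fun k => Rabs (f (S n + k)%nat))).
  { apply (ex_series_incr_n (fun k => Rabs (f k)) (S n)), Hex.
    intros j; rewrite Rabs_Rabsolu; apply Hf. }
  eapply Rle_trans; [apply Series_Rabs, Habs|].
  eapply Rle_trans.
  - apply (Series_le _ (fun k => M * (x ^ (S n + k) / INR (fact (S n + k))))).
    + intros k; split; [apply Rabs_pos | apply Hf].
    + apply (ex_series_scal_l (V := R_NormedModule)), Htail_ex.
  - rewrite Series_scal_l. apply Rmult_le_compat_l; [|exact Htail].
    pose proof (Hf O) as H0. simpl in H0. pose proof (Rabs_pos (f O)). lra.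
Qed.

Lemma exp_le_compat x y : x <= y -> exp x <= exp y.
Proof. intros [H | ->]; [left; now apply exp_increasing | apply Rle_refl]. Qed.

(* [exp_ray v w t = Re (v * Cexp (t * w))], written out so that [auto_derive] applies. *)
Definition exp_ray (v w : C) (t : R) : R :=
  exp (t * Re w) * (Re v * cos (t * Im w) - Im v * sin (t * Im w)).

Lemma is_derive_exp_ray v w t : is_derive (exp_ray v w) t (exp_ray (v * w) w t).
Proof.
  unfold exp_ray. auto_derive; [exact I|].
  destruct v as [v1 v2], w as [w1 w2]. unfold Cmult, Re, Im; simpl. ring.
Qed.

Lemma Derive_n_exp_ray v w m t : Derive_n (exp_ray v w) m t = exp_ray (v * w ^ m) w t.
Proof.
  revert t; induction m as [|m IH]; intros t.
  - simpl; now rewrite Cmult_1_r.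
  - simpl Derive_n.
    rewrite (Derive_ext _ _ _ IH), (is_derive_unique _ _ _ (is_derive_exp_ray _ w t)).
    rewrite Cpow_S. f_equal. ring.
Qed.

Lemma ex_derive_n_exp_ray v w m t : ex_derive_n (exp_ray v w) m t.
Proof.
  destruct m as [|m]; [exact I|]. simpl.
  apply (ex_derive_ext (exp_ray (v * w ^ m) w)).
  - intros s; now rewrite Derive_n_exp_ray.
  - eexists; apply is_derive_exp_ray.
Qed.

Lemma exp_ray_0 v w : exp_ray v w 0 = Re v.
Proof. unfold exp_ray. rewrite !Rmult_0_l, exp_0, cos_0, sin_0. ring. Qed.

Lemma exp_ray_1 v w : exp_ray v w 1 = Re (v * Cexp w).
Proof. unfold exp_ray, Cexp, Cmult, Re, Im; simpl. rewrite !Rmult_1_l. ring. Qed.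

Lemma Rabs_lin_cos_sin x y t : Rabs (x * cos t + y * sin t) <= Cmod (x, y).
Proof.
  unfold Cmod; simpl. rewrite <- sqrt_Rsqr_abs. apply sqrt_le_1_alt.
  pose proof (sin2_cos2 t). pose proof (Rle_0_sqr (x * sin t - y * cos t)).
  unfold Rsqr in *. nra.
Qed.

Lemma Rabs_exp_ray_le v w t : 0 <= t <= 1 -> Rabs (exp_ray v w t) <= Cmod v * exp (Cmod w).
Proof.
  intros Ht. unfold exp_ray. rewrite Rabs_mult, Rabs_pos_eq, Rmult_comm by (left; apply exp_pos).
  apply Rmult_le_compat; [apply Rabs_pos | left; apply exp_pos | |].
  - replace (Re v * cos (t * Im w) - Im v * sin (t * Im w))
      with (Re v * cos (t * Im w) + (- Im v) * sin (t * Im w)) by ring.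
    eapply Rle_trans; [apply Rabs_lin_cos_sin|]. destruct v as [v1 v2].
    right; exact (Cmod_conj (v1, v2)).
  - apply exp_le_compat. pose proof (re_le_Cmod w). pose proof (Rabs_pos (Re w)).
    eapply Rle_trans; [apply Rle_abs|]. rewrite Rabs_mult, Rabs_pos_eq by lra. nra.
Qed.

Lemma Rabs_div_fact_le (x b : R) k : Rabs x <= b -> Rabs (1 / INR (fact k) * x) <= b / INR (fact k).
Proof.
  intros H. pose proof (INR_fact_lt_0 k).
  rewrite Rabs_mult, Rabs_pos_eq by (left; apply Rdiv_lt_0_compat; lra).
  unfold Rdiv. rewrite Rmult_1_l, Rmult_comm.
  apply Rmult_le_compat_r; [left; apply Rinv_0_lt_compat; lra | exact H].
Qed.

Lemma exp_ray_taylor_le v w n :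
  Rabs (Re (v * Cexp w) - sum_n (fun m => Re (v * w ^ m) / INR (fact m)) n)
  <= Cmod v * exp_tail (Cmod w) (S n).
Proof.
  destruct (Taylor_Lagrange (exp_ray v w) (S n) 0 1 Rlt_0_1
              (fun t _ k _ => ex_derive_n_exp_ray v w k t)) as [xi [Hxi E]].
  rewrite <- exp_ray_1, E, tech5, sum_n_Reals, !Derive_n_exp_ray, exp_ray_0, Rminus_0_r, !pow1.
  rewrite (sum_eq _ (fun m => Re (v * w ^ m) / INR (fact m)))
    by (intros i _; rewrite Derive_n_exp_ray, exp_ray_0, pow1; unfold Rdiv; ring).
  match goal with |- Rabs (?s + ?t + ?r - ?s) <= _ =>
    replace (s + t + r - s) with (t + r) by ring end.
  replace (Cmod v * exp_tail (Cmod w) (S n)) with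
    (Cmod v * Cmod w ^ S n / INR (fact (S n))
     + Cmod v * Cmod w ^ S (S n) * exp (Cmod w) / INR (fact (S (S n))))
    by (unfold exp_tail; pose proof (INR_fact_lt_0 (S n));
        pose proof (INR_fact_lt_0 (S (S n))); field; lra).
  eapply Rle_trans; [apply Rabs_triang|].
  apply Rplus_le_compat; apply Rabs_div_fact_le; rewrite <- Cmod_pow, <- Cmod_mult.
  - apply re_le_Cmod.
  - apply Rabs_exp_ray_le; lra.
Qed.

Lemma Cmod_le_Re_Im c : Cmod c <= Rabs (Re c) + Rabs (Im c).
Proof.
  destruct c as [x y]. unfold Cmod, Re, Im; cbn [fst snd].
  pose proof (Rabs_pos x); pose proof (Rabs_pos y).
  rewrite <- (sqrt_pow2 (Rabs x + Rabs y)) by lra.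
  apply sqrt_le_1_alt. rewrite <- (pow2_abs x), <- (pow2_abs y). nra.
Qed.

Lemma Re_sum_n (f : nat -> C) n : Re (sum_n f n) = sum_n (fun j => Re (f j)) n.
Proof. induction n as [|n IH]; [now rewrite !sum_O|]. rewrite !sum_Sn, <- IH. apply re_plus. Qed.

Lemma Im_sum_n (f : nat -> C) n : Im (sum_n f n) = sum_n (fun j => Im (f j)) n.
Proof. induction n as [|n IH]; [now rewrite !sum_O|]. rewrite !sum_Sn, <- IH. apply im_plus. Qed.

Lemma Re_div_fact c m : Re (c / INR (fact m)) = Re c / INR (fact m).
Proof. unfold Cdiv. rewrite <- RtoC_inv by apply INR_fact_neq_0. apply re_scal_r. Qed.

Lemma Re_minus a b : Re (a - b)%C = Re a - Re b.
Proof. reflexivity. Qed.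

Lemma Im_minus a b : Im (a - b)%C = Im a - Im b.
Proof. reflexivity. Qed.

Lemma Cmod_Ci : Cmod Ci = 1.
Proof. unfold Cmod, Ci; cbn [fst snd]. replace (0 ^ 2 + 1 ^ 2) with 1 by ring. apply sqrt_1. Qed.

Lemma Rabs_Im_le_Cmod c : Rabs (Im c) <= Cmod c.
Proof.
  rewrite <- Rabs_Ropp, <- re_mult_Ci. eapply Rle_trans; [apply re_le_Cmod|].
  rewrite Cmod_mult, Cmod_Ci, Rmult_1_r. apply Rle_refl.
Qed.

Lemma Cinv_inj (x y : C) : x <> 0%C -> y <> 0%C -> (/ x = / y)%C -> x = y.
Proof.
  intros Hx Hy E.
  rewrite <- (Cmult_1_l y), <- (Cinv_r x Hx), <- Cmult_assoc, E, (Cinv_l y Hy), Cmult_1_r.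
  reflexivity.
Qed.

Lemma Cexp_taylor_le w n :
  Cmod (Cexp w - sum_n (fun m => w ^ m / INR (fact m)) n)%C <= 2 * exp_tail (Cmod w) (S n).
Proof.
  set (s := sum_n (fun m => w ^ m / INR (fact m))%C n).
  assert (Hre : forall v, Re (v * (Cexp w - s))%C =
     Re (v * Cexp w) - sum_n (fun m => Re (v * w ^ m) / INR (fact m)) n).
  { intros v.
    assert (E : sum_n (fun m => v * (w ^ m / INR (fact m)))%C n = (v * s)%C)
      by exact (sum_n_mult_l v (fun m => w ^ m / INR (fact m))%C n).
    replace (v * (Cexp w - s))%C with (v * Cexp w - v * s)%C by ring.
    rewrite <- E, Re_minus, Re_sum_n. f_equal. apply sum_n_ext; intros m.
    rewrite <- Re_div_fact. f_equal. unfold Cdiv. ring. }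
  eapply Rle_trans; [apply Cmod_le_Re_Im|].
  assert (HRe : Re (Cexp w - s)%C = Re (1 * (Cexp w - s))%C) by now rewrite Cmult_1_l.
  assert (HIm : Im (Cexp w - s)%C = - Re (Ci * (Cexp w - s))%C)
    by (rewrite Cmult_comm, re_mult_Ci; ring).
  rewrite HRe, HIm, Rabs_Ropp, !Hre.
  pose proof (exp_ray_taylor_le 1 w n). pose proof (exp_ray_taylor_le Ci w n).
  rewrite Cmod_1 in *. rewrite Cmod_Ci in *. lra.
Qed.

Lemma fser_taylor_le p M z n : (forall j, Cmod (p j) <= M) ->
  Cmod (fser p z - sum_n (fun j => p j * z ^ j / INR (fact j)) n)%C
  <= 2 * M * exp_tail (Cmod z) (S n).
Proof.
  intros hp.
  assert (Hterm : forall j, Cmod (p j * z ^ j / INR (fact j))%C <= M * (Cmod z ^ j / INR (fact j))).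
  { intros j. pose proof (INR_fact_lt_0 j). unfold Cdiv.
    rewrite <- RtoC_inv, !Cmod_mult, Cmod_pow, Cmod_R, Rabs_pos_eq
      by (apply INR_fact_neq_0 || (left; now apply Rinv_0_lt_compat)).
    unfold Rdiv; rewrite <- Rmult_assoc.
    apply Rmult_le_compat_r; [left; now apply Rinv_0_lt_compat|].
    apply Rmult_le_compat_r; [apply pow_le, Cmod_ge_0 | apply hp]. }
  assert (Hre := Series_sub_sum_n_le (fun j => Re (p j * z ^ j / INR (fact j))%C) M (Cmod z) n
                  (Cmod_ge_0 z) (fun j => Rle_trans _ _ _ (re_le_Cmod _) (Hterm j))).
  assert (Him := Series_sub_sum_n_le (fun j => Im (p j * z ^ j / INR (fact j))%C) M (Cmod z) n
                  (Cmod_ge_0 z) (fun j => Rle_trans _ _ _ (Rabs_Im_le_Cmod _) (Hterm j))).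
  eapply Rle_trans; [apply Cmod_le_Re_Im|].
  change (Series (fun j => Re (p j * z ^ j / INR (fact j))%C)) with (Re (fser p z)) in Hre.
  change (Series (fun j => Im (p j * z ^ j / INR (fact j))%C)) with (Im (fser p z)) in Him.
  rewrite Re_minus, Im_minus, Re_sum_n, Im_sum_n. lra.
Qed.

Lemma scaled_exp_tail_le (n : nat) (x r : R) : 0 <= x -> 0 < r < 1 ->
  (4 * INR n + 5 / 2) * exp_tail x n <=
  x ^ n / INR (fact n) * (15 / (1 - r ^ (n + 1))) * (INR n + 2 / (1 - r))
    * (1 + x * exp (x / r) / (r * INR n + r)).
Proof.
  intros Hx Hr. pose proof (pos_INR n) as Hn. pose proof (INR_fact_lt_0 n).
  set (A := x ^ n / INR (fact n)).
  assert (HA : 0 <= A)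
    by (apply Rmult_le_pos; [apply pow_le; lra | left; apply Rinv_0_lt_compat; lra]).
  assert (Etail : exp_tail x n = A * (1 + x * exp x / (INR n + 1))).
  { unfold exp_tail, A. simpl pow. rewrite fact_simpl, mult_INR, S_INR. field. lra. }
  assert (Hrn : 0 < r ^ (n + 1) < 1)
    by (split; [apply pow_lt; lra | apply pow_lt_1_compat; [lra | lia]]).
  assert (H15 : 15 <= 15 / (1 - r ^ (n + 1))) by (apply Rle_div_r; nra).
  assert (H2 : 2 <= 2 / (1 - r)) by (apply Rle_div_r; lra).
  assert (Hexp : exp x <= exp (x / r)) by (apply exp_le_compat, Rle_div_r; nra).
  assert (Hden : r * INR n + r <= INR n + 1) by nra.
  assert (Hfrac : x * exp x / (INR n + 1) <= x * exp (x / r) / (r * INR n + r)).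
  { unfold Rdiv. rewrite !Rmult_assoc. apply Rmult_le_compat_l; [lra|].
    apply Rmult_le_compat; [left; apply exp_pos | left; apply Rinv_0_lt_compat; lra | lra |].
    apply Rinv_le_contravar; nra. }
  assert (0 <= x * exp x / (INR n + 1))
    by (apply Rmult_le_pos;
        [apply Rmult_le_pos; [lra | left; apply exp_pos] | left; apply Rinv_0_lt_compat; lra]).
  rewrite Etail.
  replace (A * (15 / (1 - r ^ (n + 1))) * (INR n + 2 / (1 - r))
             * (1 + x * exp (x / r) / (r * INR n + r)))
    with ((15 / (1 - r ^ (n + 1)) * (INR n + 2 / (1 - r)))
          * (A * (1 + x * exp (x / r) / (r * INR n + r))))
    by ring.
  apply Rmult_le_compat; [lra | apply Rmult_le_pos; lra | nra |].
  apply Rmult_le_compat_l; lra.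
Qed.

Lemma exp_sum_approx_le (p lam : nat -> C) (M : R) (K m : nat) (z : C) :
  (forall k, (k <= K)%nat -> Cmod (lam k) = 1) ->
  (forall j, (j <= m)%nat -> sum_n (fun k => lam k ^ S j)%C K = p j) ->
  (forall j, Cmod (p j) <= M) ->
  Cmod (sum_n (fun k => lam k * Cexp (lam k * z))%C K - fser p z)%C
  <= (2 * INR (S K) + 2 * M) * exp_tail (Cmod z) (S m).
Proof.
  intros Hmod Hpow Hp.
  set (D k := (Cexp (lam k * z) - sum_n (fun j => (lam k * z) ^ j / INR (fact j)) m)%C).
  set (taylor_f := sum_n (fun j => p j * z ^ j / INR (fact j))%C m).
  assert (HS : sum_n (fun k => lam k * sum_n (fun j => (lam k * z) ^ j / INR (fact j)) m)%C K
              = taylor_f).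
  { rewrite (sum_n_ext _ (fun k => sum_n (fun j => lam k * ((lam k * z) ^ j / INR (fact j)))%C m))
      by (intros k; symmetry; exact (sum_n_mult_l (lam k) _ m)).
    rewrite sum_n_switch. apply sum_n_ext_loc; intros j Hj.
    rewrite <- (Hpow j Hj).
    transitivity (sum_n (fun k => lam k ^ S j * (z ^ j / INR (fact j)))%C K).
    - apply sum_n_ext; intros k; simpl AbelianMonoid.sort.
      rewrite Cpow_mult_l, Cpow_S. unfold Cdiv; ring.
    - etransitivity; [exact (sum_n_mult_r (z ^ j / INR (fact j))%C (fun k => lam k ^ S j)%C K)|].
      change mult with Cmult. unfold Cdiv. rewrite Cmult_assoc. reflexivity. }
  assert (Hsplit : sum_n (fun k => lam k * Cexp (lam k * z))%C K
                   = (sum_n (fun k => lam k * D k)%C K + taylor_f)%C).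
  { rewrite <- HS. symmetry. etransitivity.
    - symmetry. exact (sum_n_plus (fun k => lam k * D k)%C
        (fun k => lam k * sum_n (fun j => (lam k * z) ^ j / INR (fact j)) m)%C K).
    - apply sum_n_ext; intros k; simpl AbelianMonoid.sort. change plus with Cplus.
      unfold D; ring. }
  rewrite Hsplit.
  replace (sum_n (fun k => lam k * D k)%C K + taylor_f - fser p z)%C
    with (sum_n (fun k => lam k * D k)%C K + - (fser p z - taylor_f))%C by ring.
  eapply Rle_trans; [apply Cmod_triangle|]. rewrite Cmod_opp, Rmult_plus_distr_r.
  apply Rplus_le_compat; [|apply fser_taylor_le, Hp].
  eapply Rle_trans; [apply (norm_sum_n_m (fun k => lam k * D k)%C)|].
  change norm with Cmod.
  rewrite (sum_n_m_ext_loc _ (fun k => Cmod (D k)))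
    by (intros k Hk; rewrite Cmod_mult, Hmod by lia; apply Rmult_1_l).
  eapply Rle_trans;
    [apply (sum_n_m_le _ (fun k => 2 * exp_tail (Cmod (lam k * z)) (S m))); intros k;
     apply Cexp_taylor_le|].
  rewrite (sum_n_m_ext_loc _ (fun _ => 2 * exp_tail (Cmod z) (S m)))
    by (intros k Hk; rewrite Cmod_mult, Hmod, Rmult_1_l by lia; reflexivity).
  rewrite sum_n_m_const, Nat.sub_0_r. right; ring.
Qed.

Lemma exists_unit_nodes_power_sums (p : nat -> C) (n : nat) :
  (forall j, Cmod (p j) <= / (INR j + 2) ^ 2) ->
  exists lam : nat -> C,
    (forall i j, (i < 2 * n + 1)%nat -> (j < 2 * n + 1)%nat -> lam i = lam j -> i = j) /\
    (forall k, (k < 2 * n + 1)%nat -> Cmod (lam k) = 1) /\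
    (forall j, (j < n)%nat -> sum_n (fun k => lam k ^ S j)%C (2 * n) = p j).
Proof.
  intros hp. set (a := newton_coef p).
  assert (Htail : sum_n_m (fun j => Cmod (a j)) 1 n < 1)
    by (eapply Rle_lt_trans; [apply newton_coef_tail_le, hp | lra]).
  destruct (self_inversive_unit_roots n a (newton_coef_0 p) Htail) as [mu [Hroots Hinj]].
  assert (Hmu : forall k, (k < 2 * n + 1)%nat -> mu k <> 0%C).
  { intros k Hk E. pose proof (proj1 (Hroots k Hk)) as H1. rewrite E, Cmod_0 in H1. lra. }
  exists (fun k => / mu k)%C. split; [|split].
  - intros i j Hi Hj E. apply Hinj, Cinv_inj; auto.
  - intros k Hk. rewrite Cmod_inv, (proj1 (Hroots k Hk)) by auto. apply Rinv_1.
  - intros j Hj.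
    rewrite <- (@PowerSums.self_inversive_power_sums n p a mu (newton_coef_0 p)
                 (fun k _ => newton_coef_rec p k) (fun k Hk => proj2 (Hroots k Hk)) Hinj j Hj).
    apply sum_n_ext_loc; intros k Hk; simpl AbelianMonoid.sort.
    apply Cpow_inv, Hmu; lia.
Qed.

Theorem theorem2p1 (p : nat -> C)
  (hp : forall j : nat, Cmod (p j) <= / (INR j + 2) ^ 2)
  (n : nat) (hn : (1 <= n)%nat) :
  let N := (2 * n + 1)%nat in
  exists lam : nat -> C,
    (forall i j : nat, (1 <= i <= N)%nat -> (1 <= j <= N)%nat -> i <> j ->
       lam i <> lam j) /\
    (forall k : nat, (1 <= k <= N)%nat -> Cmod (lam k) = 1) /\
    (forall r : R, 0 < r < 1 -> forall z : C,
       Cmod (sum_n_m (fun k => (lam k * Cexp (lam k * z))%C) 1 N - fser p z)%C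
       <= (Cmod z) ^ n / INR (fact n) * (15 / (1 - r ^ (n + 1)))
          * (INR n + 2 / (1 - r))
          * (1 + Cmod z * exp (Cmod z / r) / (r * INR n + r))).
Proof.
  intros N. destruct (exists_unit_nodes_power_sums p n hp) as [lam [Hinj [Hunit Hpow]]].
  exists (fun k => lam (k - 1)%nat). split; [|split].
  - intros i j Hi Hj Hij E. apply Hij.
    enough (i - 1 = j - 1)%nat by lia.
    apply Hinj; auto; unfold N in *; lia.
  - intros k Hk. apply Hunit. unfold N in *; lia.
  - intros r Hr z. destruct n as [|m]; [lia|].
    assert (Hp : forall j, Cmod (p j) <= / 4).
    { intros j. eapply Rle_trans; [apply hp|]. apply Rinv_le_contravar; [lra|].
      pose proof (pos_INR j); nra. }
    replace (sum_n_m (fun k => lam (k - 1)%nat * Cexp (lam (k - 1)%nat * z))%C 1 N)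
      with (sum_n (fun k => lam k * Cexp (lam k * z))%C (2 * S m))
      by (unfold N; rewrite Nat.add_1_r, <- sum_n_m_S; apply sum_n_m_ext; intros k;
          now rewrite Nat.sub_succ, Nat.sub_0_r).
    eapply Rle_trans; [apply (exp_sum_approx_le p lam (/ 4) (2 * S m) m z); auto|].
    + intros k Hk. apply Hunit. lia.
    + intros j Hj. apply Hpow. lia.
    + replace (2 * INR (S (2 * S m)) + 2 * / 4) with (4 * INR (S m) + 5 / 2)
        by (rewrite (S_INR (2 * S m)), mult_INR; simpl (INR 2); lra).
      apply scaled_exp_tail_le; [apply Cmod_ge_0 | exact Hr].
Qed.
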